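(* Let $X,Y$ be separable metric spaces, $\nu$ a locally finite Borel measure on $X$, and $f:X\to Y$ a Borel function with bounded image. Then for $\nu$-a.e. $p\in X$ the following holds: whenever $(B_n)_{n\ge1}$ is a sequence of Borel sets with $\mathrm{diam}(B_n)\to0$, $p\in B_n$ for all $n$, and such that there is $C>0$ with $0<\nu(4B_n)\le C\nu(B_n)$ for all $n$, one has $$\lim_{n\to\infty}\frac1{\nu(B_n)}\int_{B_n}\mathrm{dist}_Y(f(p),f(x))\,d\nu(x)=0.$$
   Context: For $B\subset X$, $4B$ denotes the open neighbourhood $\{x:\mathrm{dist}(x,B)<1.5\,\mathrm{diam}(B)\}$. *)

From HB Require Import structures.
From mathcomp Require Import all_boot all_order all_algebra.
From mathcomp Require Import all_classical all_reals all_analysis.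
Set Implicit Arguments. Unset Strict Implicit. Unset Printing Implicit Defensive.
Import Order.TTheory GRing.Theory Num.Theory.
Local Open Scope classical_set_scope.
Local Open Scope ring_scope.

Definition separable_space (T : topologicalType) : Prop :=
  exists S : set T, countable S /\ dense S.

Section metric_defs.
Context {R : realType} {X : metricType R}.

(* diameter of a set (in the extended reals; -oo for the empty set) *)
Definition diam (B : set X) : \bar R :=
  ereal_sup [set (mdist x y)%:E | x in B & y in B].

(* distance from a point to a set (+oo for the empty set) *)
Definition dist_set (x : X) (B : set X) : \bar R :=
  ereal_inf [set (mdist x y)%:E | y in B].

Definition enlarge4 (B : set X) : set X :=
  [set x | (dist_set x B < (3%:R / 2%:R)%:E * diam B)%E].

Definition bounded_image (T : Type) (f : T -> X) : Prop :=
  exists (y0 : X) (M : R), forall t, mdist y0 (f t) <= M.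
End metric_defs.

(* The Borel measurable space on a metric space X.  The library's measurable
   types are pointed, so we give a point x0 of X. *)
Definition borel {R : realType} {X : metricType R} (x0 : X) : Type := X.

Section borel_instance.
Context {R : realType} {X : metricType R} (x0 : X).
HB.instance Definition _ := Metric.on (borel x0).
HB.instance Definition _ := isPointed.Build (borel x0) x0.
HB.instance Definition _ := @isMeasurable.Build (sigma_display (@open X))
  (borel x0) <<s @open X >> (@sigma_algebra0 _ setT (@open X))
  (@sigma_algebraC (borel x0) (@open X))
  (@sigma_algebra_bigcup _ setT (@open X)).
End borel_instance.

Definition locally_finite {R : realType} {X : metricType R} {x0 : X}
  (nu : set (borel x0) -> \bar R) : Prop :=
  forall x : X, exists2 r : R, 0 < r & (nu (ball x r) < +oo)%E.

(* Covering: among sets of positive diameter below 1, a maximal disjoint family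
   in which every member meeting the family meets one at least 4/5 as large
   (Zorn) has enlargements [enlarge4 B] covering all the sets.  Density: on an
   open [W] of finite measure every Borel set is outer regular, so a measurable
   [A] has an open [U] with [nu (U `\ A)] small; the points of [A] where [A] is
   not of density [1 - delta] along [C]-doubling sets lie in sets [B] inside [U]
   with [delta nu B <= nu (B `\ A)], whose Vitali subfamily has enlargements of
   total measure at most [C / delta * nu (U `\ A)].  Hence almost every point of
   [A] is such a density point.  Applying this to the countably many preimages
   of balls of a dense sequence in [Y], almost every [p] has, for each [lam], a
   set [A] on which [dist (f p) (f x) < lam] filling all but a fraction [delta]
   of each [B n]; as the distance is bounded by [K], the means are eventually
   below [lam + K delta]. *)

From HB Require Import structures.
From mathcomp Require Import all_boot all_order all_algebra.
From mathcomp Require Import all_classical all_reals all_analysis.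
From mathcomp Require Import ring lra measurable_realfun.
Import Order.TTheory GRing.Theory Num.Theory.
Local Open Scope classical_set_scope.
Local Open Scope ring_scope.
Set Implicit Arguments. Unset Strict Implicit. Unset Printing Implicit Defensive.

Section metric_geometry.
Context {R : realType} {X : metricType R}.
Implicit Types (B : set X) (x y : X).

Lemma open_ball x (r : R) : open (ball x r).
Proof.
rewrite openE => y; rewrite ballEmdist /= => xy.
apply/nbhs_ballP; exists (r - mdist x y) => /=; first by rewrite subr_gt0.
move=> z; rewrite !ballEmdist /= => yz.
by rewrite (le_lt_trans (metric_triangle x y z))// -ltrBrDl.
Qed.

Lemma open_mdist_itv x (a b : R) : open [set y | a < mdist x y < b].
Proof.
rewrite openE => y /= /andP[ay yb].
apply/nbhs_ballP; exists (Num.min (mdist x y - a) (b - mdist x y)) => /=.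
  by rewrite lt_min !subr_gt0 ay yb.
move=> z; rewrite ballEmdist /= lt_min => /andP[yz1 yz2].
have := metric_triangle x y z; have := metric_triangle x z y.
by rewrite (metric_sym z y) => ? ?; apply/andP; split; lra.
Qed.

Lemma le_diam B x y : B x -> B y -> ((mdist x y)%:E <= diam B)%E.
Proof. by move=> Bx By; apply: ereal_sup_ubound; exists x => //; exists y. Qed.

Lemma diam_set0 : diam (@set0 X) = -oo%E.
Proof.
rewrite /diam (_ : [set _ | x in set0 & y in set0] = set0) ?ereal_sup0//.
by apply/seteqP; split => z //= [x].
Qed.

Lemma diam_gt0_nonempty B : (0 < diam B)%E -> B !=set0.
Proof.
move=> d0; apply/set0P/negP => /eqP B0.
by move: d0; rewrite B0 diam_set0 ltNge leNye.
Qed.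

Lemma dist_set_le x B y : B y -> (dist_set x B <= (mdist x y)%:E)%E.
Proof. by move=> By; apply: ereal_inf_lbound; exists y. Qed.

Lemma dist_set_ge0 x B : (0 <= dist_set x B)%E.
Proof. by apply: le_ereal_inf_tmp => _ [y _ <-]; rewrite lee_fin mdist_ge0. Qed.

Lemma open_dist_set_lt B (c : \bar R) : open [set x | (dist_set x B < c)%E].
Proof.
rewrite openE => x /= /ereal_inf_lt[_ [y By <-] xyc]; apply/nbhs_ballP.
case: c xyc => [r| |] //= xyr; last first.
  by exists 1 => //= z _ /=; rewrite (le_lt_trans (dist_set_le z By))// ltry.
exists (r - mdist x y) => /=; first by rewrite subr_gt0 -lte_fin.
move=> z; rewrite ballEmdist /= => xz.
rewrite (le_lt_trans (dist_set_le z By))// lte_fin.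
by rewrite (le_lt_trans (metric_triangle z x y))// metric_sym -ltrBrDr.
Qed.

Lemma subset_ball_diam B p r : B p -> (diam B < r%:E)%E -> B `<=` ball p r.
Proof.
move=> Bp dBr x Bx; rewrite ballEmdist /=.
by rewrite -lte_fin (le_lt_trans (le_diam Bp Bx)).
Qed.

Lemma enlarge4_diam_le0 B : (diam B <= 0)%E -> enlarge4 B = set0.
Proof.
move=> dB0; apply/seteqP; split => x //; rewrite /enlarge4 /= => x4B.
have : ((3%:R / 2%:R)%:E * diam B <= 0)%E.
  by rewrite mule_ge0_le0// lee_fin divr_ge0.
by move=> /(lt_le_trans x4B); rewrite ltNge dist_set_ge0.
Qed.

Lemma enlarge4_set0 : enlarge4 (@set0 X) = set0.
Proof. by apply: enlarge4_diam_le0; rewrite diam_set0 leNye. Qed.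

Lemma subset_enlarge4 B B' z : B z -> B' z ->
  (diam B < (3%:R / 2%:R)%:E * diam B')%E -> B `<=` enlarge4 B'.
Proof.
move=> Bz B'z dBB' x Bx; rewrite /enlarge4 /=.
exact: le_lt_trans (dist_set_le x B'z) (le_lt_trans (le_diam Bx Bz) dBB').
Qed.

End metric_geometry.

Section vitali_covering.
Context {R : realType} {X : metricType R}.
Implicit Types (B : set X) (F G : set (set X)).

Definition meets B B' := B `&` B' !=set0.

(* Any factor in (1, 3/2) would do for 5/4: above 1 for the maximality
   argument, below 3/2 so that [B] lies in the enlargement [enlarge4 B']. *)
Definition vitali_dominated F G := forall B, F B ->
  (exists2 B', G B' & meets B B') ->
  exists B', [/\ G B', meets B B' & (diam B < (5%:R / 4%:R)%:E * diam B')%E].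

Definition vitali_family F G :=
  [/\ G `<=` F, trivIset G id & vitali_dominated F G].

Variable F : set (set X).
Hypothesis F_diam : forall B, F B -> (0 < diam B)%E /\ (diam B < 1%E)%E.

Lemma vitali_family_chain (Fc : set (set (set X))) :
  (forall G, Fc G -> vitali_family F G) -> total_on Fc (fun G G' => G `<=` G') ->
  vitali_family F (\bigcup_(G in Fc) G).
Proof.
move=> FcP Fctot; split.
- by move=> B [G /FcP[GF _ _] GB]; exact: GF.
- move=> B B' [G1 /[dup] G1c /FcP[_ G1d _] G1B] [G2 /[dup] G2c /FcP[_ G2d _] G2B].
  by case: (Fctot _ _ G1c G2c) => [G12|G21];
    [apply: G2d => //; exact: G12|apply: G1d => //; exact: G21].
- move=> B FB [B' [G Gc GB'] mBB'].
  have [_ _ GOm] := FcP _ Gc.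
  have [|B'' [GB'' mB'' dB'']] := GOm _ FB; first by exists B'.
  by exists B''; split => //; exists G.
Qed.

(* Adding an almost largest member missing G keeps the family dominated. *)
Lemma vitali_family_extend G B1 : vitali_family F G -> F B1 ->
  (forall B', G B' -> ~ meets B1 B') ->
  exists G', G `<` G' /\ vitali_family F G'.
Proof.
move=> [GF Gdisj GOm] FB1 nB1.
pose H := [set B | F B /\ forall B', G B' -> ~ meets B B'].
pose s := ereal_sup (diam @` H).
have s_gt0 : (0 < s)%E.
  by apply: lt_le_trans (proj1 (F_diam FB1)) _; apply: ereal_sup_ubound; exists B1.
have [t st t_gt0] : exists2 t : R, s = t%:E & 0 < t.
  have s_le1 : (s <= 1%E)%E.
    by apply: ge_ereal_sup => _ [B [FB _] <-]; apply/ltW; case: (F_diam FB).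
  by move: s_gt0 s_le1; case: s => [t| |] //; rewrite ?lte_fin => t0 _; exists t.
have : ((4%:R / 5%:R * t)%:E < s)%E.
  by rewrite st lte_fin gtr_pMl// ltr_pdivrMr// mul1r ltr_nat.
move=> /ereal_sup_gt[_ [B0 [FB0 nB0] <-] dB0].
have [d0 d0E] : exists d0 : R, diam B0 = d0%:E.
  by case: (F_diam FB0); case: (diam B0) => [d| |] //; exists d.
have d0_gt0 : 0 < d0 by rewrite -lte_fin -d0E; case: (F_diam FB0).
exists (G `|` [set B0]); split.
  split; first by move=> B GB; left.
  move=> /(_ B0 (or_intror erefl)) GB0; apply: (nB0 _ GB0).
  by have [x B0x] := diam_gt0_nonempty (proj1 (F_diam FB0)); exists x.
split.
- by move=> B [/GF //|->].
- move=> B B' [GB|->] [GB'|->] m //; first exact: Gdisj.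
  + by exfalso; apply: (nB0 _ GB); rewrite /meets setIC.
  + by exfalso; apply: (nB0 _ GB').
- move=> B FB mB.
  have [[B'' GB'' m'']|nG] := pselect (exists2 B', G B' & meets B B').
    have [B3 [GB3 m3 d3]] := GOm _ FB (ex_intro2 _ _ B'' GB'' m'').
    by exists B3; split => //; left.
  have mB0 : meets B B0 by case: mB => B' [GB'|->] m //; exfalso; apply: nG; exists B'.
  exists B0; split => //; first by right.
  have : (diam B <= s)%E.
    apply: ereal_sup_ubound; exists B => //.
    by split => // B' GB' m; apply: nG; exists B'.
  move=> /le_lt_trans; apply.
  move: dB0; rewrite st d0E -EFinM !lte_fin => dB0.
  by rewrite -ltr_pdivrMl ?divr_gt0// invf_div.
Qed.

Lemma vitali_covering : exists G, [/\ G `<=` F, trivIset G id &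
  forall B, F B -> exists2 B', G B' & B `<=` enlarge4 B'].
Proof.
have [G [[GF Gdisj GOm] Gmax]] : exists G, vitali_family F G /\
    forall G', G `<` G' -> ~ vitali_family F G'.
  by apply: Zorn_bigcup; exact: vitali_family_chain.
have Gmeets B : F B -> exists2 B', G B' & meets B B'.
  move=> FB; apply: contrapT => nB.
  have [G' [GG' G'fam]] := vitali_family_extend (And3 GF Gdisj GOm) FB
    (fun B' GB' m => nB (ex_intro2 _ _ B' GB' m)).
  exact: Gmax GG' G'fam.
exists G; split => // B FB.
have [B' GB' m] := Gmeets _ FB.
have [B'' [GB'' [z [Bz B''z]] dB'']] := GOm _ FB (ex_intro2 _ _ B' GB' m).
exists B'' => //; apply: (subset_enlarge4 Bz B''z); apply: (lt_le_trans dB'').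
apply: lee_wpmul2r; first by apply/ltW; case: (F_diam (GF _ GB'')).
by rewrite lee_fin; lra.
Qed.

End vitali_covering.

Lemma natSinv_lt {R : archiRealFieldType} (e : R) : 0 < e ->
  exists n : nat, n.+1%:R^-1 < e.
Proof.
move=> e0; have [N _ N_lt] := near_infty_natSinv_lt (PosNum e0).
by exists N; exact: (N_lt N (leqnn N)).
Qed.

Lemma cvge0_nonneg {R : realType} (u : nat -> \bar R) :
  (forall e, 0 < e -> \forall n \near \oo, (0 <= u n <= e%:E)%E) -> u @ \oo --> 0%E.
Proof.
move=> ule; apply/fine_cvgP; split.
  apply: filterS (ule 1 ltr01) => n /andP[u0 u1].
  by rewrite ge0_fin_numE// (le_lt_trans u1) ?ltry.
apply/cvgrPdist_le => e e0; apply: filterS (ule e e0) => n /andP[u0 ue].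
have ufin : u n \is a fin_num by rewrite ge0_fin_numE// (le_lt_trans ue) ?ltry.
by rewrite sub0r normrN ger0_norm ?fine_ge0// -lee_fin fineK.
Qed.

Lemma cvge0_lt {R : realType} {u : nat -> \bar R} {e : R} :
  u @ \oo --> 0%E -> 0 < e -> \forall n \near \oo, (u n < e%:E)%E.
Proof.
move=> u0 e0; apply: (u0 [set x | (x < e%:E)%E]).
by apply: open_ereal_lt'; rewrite lte_fin.
Qed.

Section measure_counting.
Context {d} {T : measurableType d} {R : realType}.
Variable mu : {measure set T -> \bar R}.

Lemma countable_trivIset_measure_gt0 (W : set T) (G : set (set T)) :
  measurable W -> (mu W < +oo)%E ->
  (forall B, G B -> [/\ measurable B, B `<=` W & (0 < mu B)%E]) ->
  trivIset G id -> countable G.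
Proof.
move=> mW Wfin HG Gdisj.
have [w wE] : exists w, mu W = w%:E.
  by exists (fine (mu W)); rewrite fineK// ge0_fin_numE.
pose Gk k := [set B | G B /\ ((k.+1%:R^-1)%:E < mu B)%E].
have GGk : G `<=` \bigcup_(k in setT) Gk k.
  move=> B GB; have [mB BW muB0] := HG _ GB.
  have [b bE] : exists b, mu B = b%:E.
    exists (fine (mu B)); rewrite fineK// ge0_fin_numE//.
    by rewrite (le_lt_trans _ Wfin)// le_measure// inE.
  move: muB0; rewrite bE lte_fin => b0.
  exists (Num.truncn b^-1) => //; split => //; rewrite bE lte_fin.
  by rewrite -[ltRHS]invrK ltf_pV2 ?posrE ?invr_gt0 ?ltr0n// truncnS_gt.
apply: (sub_countable (subset_card_le GGk)).
apply: bigcup_countable => [|k _]; first exact: countableP.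
(* [Gk k] is finite: [w * k.+1 + 1] of its members would have measure > mu W. *)
apply: finite_set_countable; apply: contrapT.
move=> /infiniteP/pcard_leP[b].
have Gb i : Gk k (b i) by apply: funS.
have mb i : measurable (b i) by have [] := HG _ (proj1 (Gb i)).
have binj : injective b by move=> i j; apply: inj; rewrite in_setT.
have tb : trivIset setT b.
  move=> i j _ _ bij; apply: binj.
  by apply: Gdisj; [exact: (proj1 (Gb i))|exact: (proj1 (Gb j))|].
pose n := (Num.truncn (w * k.+1%:R)).+1.
have : (\sum_(i < n) mu (b i) <= w%:E)%E.
  rewrite -measure_bigsetU// -wE; apply: le_measure; rewrite ?inE//.
    exact: bigsetU_measurable.
  move=> x; rewrite -bigcup_mkord => -[i _ bix].
  by have [_ + _] := HG _ (proj1 (Gb i)); apply.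
apply/negP; rewrite -ltNge.
have sum_gt : (\sum_(i < n) (k.+1%:R^-1)%:E <= \sum_(i < n) mu (b i))%E.
  by apply: lee_sum => i _; exact: ltW (proj2 (Gb i)).
apply: lt_le_trans sum_gt.
rewrite sumEFin sumr_const card_ord lte_fin -[_ *+ n]mulr_natl.
rewrite ltr_pdivlMr ?ltr0n//.
exact: truncnS_gt.
Qed.

Lemma measure_nonincreasing_small (F : nat -> set T) e : 0 < e ->
  (mu (F 0%N) < +oo)%E -> (forall i, measurable (F i)) ->
  nonincreasing_seq F -> \bigcap_n F n = set0 -> exists N, (mu (F N) < e%:E)%E.
Proof.
move=> e0 F0 mF Fdec F0E.
have := nonincreasing_cvg_mu F0 mF (bigcap_measurable _ (fun n _ => mF n)) Fdec.
rewrite F0E measure0 => /(_ (ex_intro _ 0%N I))/cvge0_lt/(_ e0)[N _ FN].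
by exists N; apply: FN => /=.
Qed.

Lemma measure_bigcup_tail_small (A : nat -> set T) (W : set T) e : 0 < e ->
  (forall n, measurable (A n)) -> measurable W -> (mu W < +oo)%E ->
  exists N, (mu ((\bigcup_n A n `\` \big[setU/set0]_(i < N) A i) `&` W) < e%:E)%E.
Proof.
move=> e0 mA mW Wfin.
have mE N : measurable ((\bigcup_n A n `\` \big[setU/set0]_(i < N) A i) `&` W).
  apply: measurableI => //; apply: measurableD; first exact: bigcupT_measurable.
  exact: bigsetU_measurable.
apply: measure_nonincreasing_small => //.
- by apply: le_lt_trans Wfin; apply: le_measure; rewrite ?inE// => x [].
- move=> m n /= mn; apply/subsetPset => x [[Ax nAx] Wx]; split => //; split => // Amx.
  apply: nAx; move: Amx; rewrite -!bigcup_mkord => -[i /= im Aix].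
  by exists i => //; exact: leq_trans im mn.
- apply/seteqP; split => // x Ex.
  have [[[k _ Akx] _] _] := Ex 0%N I.
  have [[_ nA] _] := Ex k.+1 I; apply: nA.
  by rewrite -bigcup_mkord; exists k => /=.
Qed.

Lemma measure_bigcup_le_geometric (F : nat -> set T) e :
  (forall n, measurable (F n)) -> (forall n, (mu (F n) <= (e / (2 ^ (n + 2))%:R)%:E)%E) ->
  (mu (\bigcup_n F n) <= (e / 2)%:E)%E.
Proof.
move=> mF Fe; have mUF : measurable (\bigcup_n F n) by exact: bigcupT_measurable.
have := @measure_sigma_subadditive _ _ _ mu _ F mF mUF (@subset_refl _ _).
move=> /le_trans; apply.
apply: (@le_trans _ _ (\sum_(n <oo) (e / (2 ^ (n + 2))%:R)%:E)%E).
  by apply: lee_nneseries => n _ //.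
by have /cvg_lim <- // := @cvg_geometric_eseries_half _ e 1; rewrite expr1.
Qed.

End measure_counting.

Lemma trivIset_enum {T} (G : set (set T)) : countable G -> trivIset G id ->
  exists g : nat -> set T,
    [/\ forall n, G (g n) \/ g n = set0, G `<=` range g & trivIset setT g].
Proof.
move=> /countable_injP[i iinj] Gdisj.
pose g n := xget set0 [set B | G B /\ i B = n].
have gP n : (G (g n) /\ i (g n) = n) \/ g n = set0.
  have [ex|nex] := pselect (exists B, G B /\ i B = n).
    by left; exact: (xgetPex set0 ex).
  by right; apply: xgetPN => B HB; apply: nex; exists B.
exists g; split.
- by move=> n; case: (gP n) => [[]|]; [left|right].
- move=> B GB; exists (i B) => //.
  have [Gg ig] : G (g (i B)) /\ i (g (i B)) = i B :=
    @xgetPex _ set0 [set B' | G B' /\ i B' = i B] (ex_intro _ B (conj GB erefl)).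
  by apply: iinj; rewrite ?inE.
- move=> m n _ _ gmn.
  have [[Gm im]|m0] := gP m; last by move: gmn; rewrite m0 set0I => -[].
  have [[Gn iN]|n0] := gP n; last by move: gmn; rewrite n0 setI0 => -[].
  by rewrite -im -iN (Gdisj _ _ Gm Gn gmn).
Qed.

Section borel_measure.
Context {R : realType} {X : metricType R} (x0 : X).
Local Notation T := (borel x0).
Variable nu : {measure set T -> \bar R}.

Lemma open_measurable_borel (U : set T) : open U -> measurable U.
Proof. by move=> oU; exact: sub_sigma_algebra. Qed.

Lemma enlarge4_measurable (B : set T) : measurable (enlarge4 B).
Proof. by apply: open_measurable_borel; exact: open_dist_set_lt. Qed.

Lemma enlarge4_cover_measure (A U : set T) (G : set (set T)) (K : R) : 0 <= K ->
  measurable A -> measurable U -> countable G -> trivIset G id ->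
  (forall B, G B -> [/\ measurable B, B `<=` U &
     (nu (enlarge4 B) <= K%:E * nu (B `\` A))%E]) ->
  exists N, [/\ measurable N, (forall B, G B -> enlarge4 B `<=` N) &
    (nu N <= K%:E * nu (U `\` A))%E].
Proof.
move=> K0 mA mU cG Gdisj HG.
have [g [gG Gg gdisj]] := trivIset_enum cG Gdisj.
have mg n : measurable (g n) by case: (gG n) => [/HG[]|->].
have mN : measurable (\bigcup_n enlarge4 (g n)).
  by apply: bigcupT_measurable => n; exact: enlarge4_measurable.
exists (\bigcup_n enlarge4 (g n)); split => //.
  by move=> B /Gg[n _ <-] x gx; exists n.
apply: le_trans (measure_sigma_subadditive _ (fun n => enlarge4_measurable _) mN
  (@subset_refl _ _)) _.
apply: (@le_trans _ _ (\sum_(n <oo) (K%:E * nu (g n `\` A)))%E).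
  apply: lee_nneseries => n _ //.
  by case: (gG n) => [/HG[] //|->]; rewrite enlarge4_set0 measure0 mule_ge0.
rewrite nneseriesZl// -measure_semi_bigcup//.
- apply: lee_wpmul2l; first by rewrite lee_fin.
  apply: le_measure; rewrite ?inE; last 1 first.
  + move=> x [n _ [gnx nAx]]; split => //.
    by case: (gG n) gnx => [/HG[_ + _]|->] //; apply.
  + by apply: bigcupT_measurable => n; exact: measurableD.
  + exact: measurableD.
- by move=> n; exact: measurableD.
- by move=> m n _ _ [x [[gmx _] [gnx _]]]; apply: gdisj => //; exists x.
- by apply: bigcupT_measurable => n; exact: measurableD.
Qed.

Section open_regularity.
Variables (W : set T) (oW : open W) (Wfin : (nu W < +oo)%E).

(* The sets squeezed between open sets up to small measure in W form a
   sigma-algebra containing the open sets, hence all Borel sets. *)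
Definition open_regular (A : set T) := forall e, 0 < e -> exists U V,
  [/\ open U, open V, A `<=` U, ~` A `<=` V & (nu (U `&` V `&` W) < e%:E)%E].

Let mW : measurable W := open_measurable_borel oW.

Lemma open_regular_open U : open U -> open_regular U.
Proof.
move=> oU e e0.
pose V k := [set x : T | (dist_set x (~` U) < (k.+1%:R^-1)%:E)%E].
have oV k : open (V k) by exact: open_dist_set_lt.
have mUVW k : measurable (U `&` V k `&` W).
  by apply: measurableI => //; apply: measurableI; apply: open_measurable_borel.
have [N VN] : exists N, (nu (U `&` V N `&` W) < e%:E)%E.
  apply: measure_nonincreasing_small; [exact: e0| |exact: mUVW| |].
  - by apply: le_lt_trans Wfin; apply: le_measure; rewrite ?inE// => x [].
  - move=> m n /= mn; apply/subsetPset => x [[Ux Vx] Wx]; split => //; split => //.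
    rewrite /V /= (lt_le_trans Vx)// lee_fin lef_pV2 ?posrE ?ltr0n// ler_nat.
    by rewrite ltnS.
  - apply/seteqP; split => // x Fx.
    have [[Ux _] _] := Fx 0%N I.
    have /nbhs_ballP[r r0 rU] : nbhs x U by apply: open_nbhs_nbhs.
    have : (r%:E <= dist_set x (~` U))%E.
      apply: le_ereal_inf_tmp => _ [y Uy <-]; rewrite lee_fin leNgt; apply/negP => xy.
      by apply: Uy; apply: rU; rewrite ballEmdist.
    have [[_ Vk] _] := Fx (Num.truncn r^-1) I.
    move=> /le_lt_trans /(_ Vk); rewrite lte_fin => rk.
    have : (Num.truncn r^-1).+1%:R^-1 < r.
      by rewrite -[ltRHS]invrK ltf_pV2 ?posrE ?invr_gt0 ?ltr0n// truncnS_gt.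
    by move=> /(lt_trans rk); rewrite ltxx.
exists U, (V N); split => // x Ux; rewrite /V /=.
apply: (le_lt_trans (dist_set_le x Ux)).
by rewrite mdistxx lte_fin invr_gt0 ltr0n.
Qed.

Lemma open_regularC A : open_regular A -> open_regular (~` A).
Proof.
move=> rA e e0; have [U [V [oU oV AU AV UVW]]] := rA e e0.
by exists V, U; split; rewrite ?setCK// (setIC V U).
Qed.

Lemma open_regular_bigcup (A : nat -> set T) : (forall n, measurable (A n)) ->
  (forall n, open_regular (A n)) -> open_regular (\bigcup_n A n).
Proof.
move=> mA rA e e0.
have /choice[UV HUV] : forall n, exists UV : set T * set T,
    [/\ open UV.1, open UV.2, A n `<=` UV.1, ~` A n `<=` UV.2 &
      (nu (UV.1 `&` UV.2 `&` W) < (e / (2 ^ (n + 2))%:R)%:E)%E].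
  move=> n; have [|U [V [oU oV AU AV UVW]]] := rA n (e / (2 ^ (n + 2))%:R).
    by rewrite divr_gt0// ltr0n expn_gt0.
  by exists (U, V).
have [N tailN] := measure_bigcup_tail_small (divr_gt0 e0 (ltr0n _ 2)) mA mW Wfin.
pose tail := (\bigcup_n A n `\` \big[setU/set0]_(i < N) A i) `&` W.
pose U := \bigcup_n (UV n).1.
pose V := \big[setI/setT]_(i < N) (UV i).2.
pose Z := \bigcup_n ((UV n).1 `&` (UV n).2 `&` W).
have oU : open U by apply: bigcup_open => n _; case: (HUV n).
have oV : open V.
  apply: (big_ind (fun S : set T => open S)); [exact: openT|exact: openI|].
  by move=> i _; case: (HUV i).
have mUVW n : measurable ((UV n).1 `&` (UV n).2 `&` W).
  case: (HUV n) => oU1 oV1 _ _ _.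
  by apply: measurableI => //; apply: measurableI; exact: open_measurable_borel.
have mZ : measurable Z by exact: bigcupT_measurable.
have mtail : measurable tail.
  apply: measurableI => //; apply: measurableD; first exact: bigcupT_measurable.
  exact: bigsetU_measurable.
have Vi x i : V x -> (i < N)%N -> (UV i).2 x.
  by rewrite /V -(bigcap_mkord N (fun i => (UV i).2)) => Vx iN; exact: Vx.
exists U, V; split => //.
- by move=> x [n _ Anx]; exists n => //; case: (HUV n) => _ _ + _ _; apply.
- rewrite /V -(bigcap_mkord N (fun i => (UV i).2)) => x nAx i _.
  by case: (HUV i) => _ _ _ + _; apply => Aix; apply: nAx; exists i.
have UVWsub : U `&` V `&` W `<=` tail `|` Z.
  move=> x [[[n _ Ux] Vx] Wx].
  have [Anx|nAnx] := pselect (A n x); last first.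
    by right; exists n => //; do 2 split => //; case: (HUV n) => _ _ _ + _; apply.
  have [[i iN Aix]|nex] := pselect (exists2 i, (i < N)%N & A i x).
    right; exists i => //; split => //; split; last exact: Vi.
    by case: (HUV i) => _ _ + _ _; apply.
  left; split => //; split; first by exists n.
  by rewrite -bigcup_mkord => -[i /= iN Aix]; apply: nex; exists i.
have Zle : (nu Z <= (e / 2)%:E)%E.
  by apply: measure_bigcup_le_geometric => // n; apply/ltW; case: (HUV n).
apply: le_lt_trans (le_measure _ _ _ UVWsub) _; rewrite ?inE.
- by apply: measurableI => //; apply: measurableI; exact: open_measurable_borel.
- exact: measurableU.
apply: le_lt_trans (measureU2 _ _ _) _ => //.
by rewrite [e]splitr EFinD lte_leD// ge0_fin_numE// (le_lt_trans Zle) ?ltry.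
Qed.

Lemma open_regular_measurable A : measurable A -> open_regular A.
Proof.
pose K := [set B : set T | measurable B /\ open_regular B].
have sK : sigma_algebra setT K.
  split.
  - split => // e e0; exists set0, setT; split => //; [exact: open0|exact: openT|].
    by rewrite !set0I measure0 lte_fin.
  - by move=> B [mB rB]; split; [exact: measurableD|rewrite setTD; exact: open_regularC].
  - move=> F KF; split; first by apply: bigcupT_measurable => n; case: (KF n).
    by apply: open_regular_bigcup => n; case: (KF n).
have oK : @open T `<=` K.
  by move=> U oU; split; [exact: open_measurable_borel|exact: open_regular_open].
by move=> mA; exact: (smallest_sub sK oK mA).2.
Qed.

Lemma outer_regular A e : measurable A -> 0 < e ->
  exists U, [/\ open U, A `&` W `<=` U, U `<=` W & (nu (U `\` A) < e%:E)%E].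
Proof.
move=> mA e0; have [U [V [oU oV AU AV UVW]]] := open_regular_measurable mA e0.
exists (U `&` W); split => //; first exact: openI.
- by move=> x [Ax Wx]; split => //; exact: AU.
apply: le_lt_trans UVW; apply: le_measure; rewrite ?inE.
- by apply: measurableD => //; apply: open_measurable_borel; exact: openI.
- by apply: measurableI => //; apply: measurableI; exact: open_measurable_borel.
by move=> x [[Ux Wx] nAx]; split => //; split => //; exact: AV.
Qed.

End open_regularity.

End borel_measure.

Section density_points.
Context {R : realType} {X : metricType R} (x0 : X).
Local Notation T := (borel x0).
Variable nu : {measure set T -> \bar R}.

Definition density_point (A : set T) (C delta : R) (p : T) :=
  exists2 r : R, 0 < r & forall B : set T, measurable B -> B p ->
    (diam B < r%:E)%E -> (0 < nu (enlarge4 B))%E ->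
    (nu (enlarge4 B) <= C%:E * nu B)%E -> (nu (B `\` A) < delta%:E * nu B)%E.

Lemma measure_gt0_doubling (B : set T) C : (0 < nu (enlarge4 B))%E ->
  (nu (enlarge4 B) <= C%:E * nu B)%E -> (0 < nu B)%E.
Proof.
move=> nu4B0 nu4B; rewrite lt0e measure_ge0 andbT.
by apply: contraTneq nu4B0 => nuB0; rewrite -leNgt (le_trans nu4B)// nuB0 mule0.
Qed.

Lemma density_point_le A C C' delta delta' p : C' <= C -> delta <= delta' ->
  density_point A C delta p -> density_point A C' delta' p.
Proof.
move=> CC' dd' [r r0 Ar]; exists r => // B mB Bp dB nu4B0 nu4B.
apply: lt_le_trans (Ar B mB Bp dB nu4B0 _) _; last first.
  by apply: lee_wpmul2r; rewrite ?measure_ge0 ?lee_fin.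
by apply: le_trans nu4B _; apply: lee_wpmul2r; rewrite ?measure_ge0 ?lee_fin.
Qed.

Definition sparse_sets (A U : set T) (C delta : R) := [set B : set T |
  [/\ measurable B, B `<=` U, (0 < diam B)%E /\ (diam B < 1%E)%E,
    (0 < nu (enlarge4 B))%E /\ (nu (enlarge4 B) <= C%:E * nu B)%E &
    (delta%:E * nu B <= nu (B `\` A))%E]].

Lemma not_density_point_sparse A U C delta p : open U -> U p ->
  ~ density_point A C delta p -> exists2 B, sparse_sets A U C delta B & B p.
Proof.
move=> oU Up nAp; have /nbhs_ballP[r r0 rU] : nbhs p U by apply: open_nbhs_nbhs.
apply: contrapT => nB; apply: nAp; exists (Num.min r 1); first by rewrite lt_min r0 ltr01.
move=> B mB Bp dB nu4B0 nu4B; rewrite ltNge; apply/negP => sparseB.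
apply: nB; exists B => //; split => //.
- apply: subset_trans rU; apply: subset_trans (subset_ball_diam Bp dB) _.
  by apply: le_ball; rewrite ge_min lexx.
- split; last by apply: (lt_le_trans dB); rewrite lee_fin ge_min lexx orbT.
  rewrite ltNge; apply/negP => dB0.
  by move: nu4B0; rewrite enlarge4_diam_le0// measure0 ltxx.
Qed.

(* A non-density point lies in a sparse set, hence in [enlarge4 B] for some [B]
   of a disjoint Vitali subfamily; summing [nu (enlarge4 B) <= C / delta *
   nu (B `\` A)] over that subfamily bounds [N] by [C / delta * nu (U `\` A)]. *)
Lemma non_density_points_small (W A U : set T) (C delta eta : R) :
  0 < C -> 0 < delta -> open W -> (nu W < +oo)%E -> measurable A -> open U ->
  U `<=` W -> A `&` W `<=` U -> (nu (U `\` A) <= eta%:E)%E ->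
  exists N, [/\ measurable N, (nu N <= (C / delta * eta)%:E)%E &
    forall p, A p -> W p -> ~ density_point A C delta p -> N p].
Proof.
move=> C0 d0 oW Wfin mA oU UW AWU UAeta.
have [G [GF Gdisj Gcov]] := @vitali_covering _ T (sparse_sets A U C delta)
  (fun B FB => let: And5 _ _ dB _ _ := FB in dB).
have cG : countable G.
  apply: (countable_trivIset_measure_gt0 (open_measurable_borel oW) Wfin _ Gdisj).
  move=> B /GF[mB BU _ [nu4B0 nu4B] _]; split => //; first exact: subset_trans UW.
  exact: measure_gt0_doubling nu4B.
have CdK : 0 <= C / delta by rewrite divr_ge0// ltW.
have HG B : G B -> [/\ measurable B, B `<=` U &
    (nu (enlarge4 B) <= (C / delta)%:E * nu (B `\` A))%E].
  move=> /GF[mB BU _ [_ nu4B] sparseB]; split => //; apply: le_trans nu4B _.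
  apply: (@le_trans _ _ ((C / delta)%:E * (delta%:E * nu B))%E).
    by rewrite muleA -EFinM divfK// gt_eqF.
  by apply: lee_wpmul2l; rewrite ?lee_fin.
have [N [mN N4 Nle]] := enlarge4_cover_measure CdK mA
  (open_measurable_borel oU) cG Gdisj HG.
exists N; split => //.
  apply: le_trans Nle _; rewrite (EFinM (C / delta) eta).
  by apply: lee_wpmul2l; rewrite ?lee_fin.
move=> p Ap Wp nAp.
have [B FB Bp] := not_density_point_sparse oU (AWU _ (conj Ap Wp)) nAp.
by have [B' GB' BB'] := Gcov _ FB; exact: N4 GB' _ (BB' _ Bp).
Qed.

Lemma ae_density_point (W A : set T) (C delta : R) : 0 < C -> 0 < delta ->
  open W -> (nu W < +oo)%E -> measurable A ->
  {ae nu, forall p, A p -> W p -> density_point A C delta p}.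
Proof.
move=> C0 d0 oW Wfin mA.
have /choice[N HN] m : exists N, [/\ measurable N, (nu N <= (m.+1%:R^-1)%:E)%E &
    forall p, A p -> W p -> ~ density_point A C delta p -> N p].
  have eta0 : 0 < delta / C / m.+1%:R by rewrite !divr_gt0// ltr0n.
  have [U [oU AWU UW UA]] := outer_regular oW Wfin mA eta0.
  have [N [mN Nle Np]] := non_density_points_small C0 d0 oW Wfin mA oU UW AWU (ltW UA).
  exists N; split => //; apply: le_trans Nle _.
  suff -> : C / delta * (delta / C / m.+1%:R) = m.+1%:R^-1 by [].
  by field; rewrite ?gt_eqF// ltr0n.
have mN : measurable (\bigcap_m N m) by apply: bigcapT_measurable => m; case: (HN m).
exists (\bigcap_m N m); split; first exact: mN.
- apply/eqP; rewrite eq_le measure_ge0 andbT; apply/lee_addgt0Pr => e e0.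
  have [m me] := natSinv_lt e0; have [mNm Nm _] := HN m.
  rewrite add0e; apply: le_trans (le_trans _ Nm) _; last by rewrite lee_fin ltW.
  by apply: le_measure; rewrite ?inE// => x /(_ m I).
- move=> p /= /not_implyP[Ap /not_implyP[Wp nAp]] m _.
  by case: (HN m) => _ _; apply.
Qed.

End density_points.

Lemma separable_seq {R : realType} (Z : metricType R) (z0 : Z) : separable_space Z ->
  exists s : nat -> Z, forall z (r : R), 0 < r -> exists i, mdist z (s i) < r.
Proof.
move=> [S [/countable_injP[i iinj] dS]].
pose s n := xget z0 [set z | S z /\ i z = n].
exists s => z r r0.
have [y [zy Sy]] : ball z r `&` S !=set0.
  by apply: dS; [exists z; rewrite ballEmdist /= mdistxx|exact: open_ball].
exists (i y); have [Ss sE] : S (s (i y)) /\ i (s (i y)) = i y :=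
  @xgetPex _ z0 [set z | S z /\ i z = i y] (ex_intro _ y (conj Sy erefl)).
have -> : s (i y) = y by apply: iinj; rewrite ?inE.
by move: zy; rewrite ballEmdist.
Qed.

Lemma measurable_mdist_comp {R : realType} {d} (T : measurableType d)
    (Y : metricType R) (y0 : Y) (f : T -> borel y0) (y : Y) :
  measurable_fun setT f -> measurable_fun setT (fun x => mdist y (f x)).
Proof.
move=> mf; apply: (measurability _ (RGenOpens.measurableE R)).
move=> _ [_ [a [b ->]] <-].
have -> : setT `&` (fun x => mdist y (f x)) @^-1` `]a, b[%classic =
    setT `&` f @^-1` [set z | a < mdist y z < b].
  by apply/seteqP; split => x /= [_ h]; split => //; move: h; rewrite /= in_itv.
by apply: mf => //; apply: sub_sigma_algebra; exact: open_mdist_itv.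
Qed.

Section mean_oscillation.
Context {d} {T : measurableType d} {R : realType}.
Variable mu : {measure set T -> \bar R}.

Lemma integral_le_split (b A : set T) (g : T -> R) (a K : R) :
  measurable b -> measurable A -> measurable_fun b g -> 0 <= a ->
  (forall x, b x -> 0 <= g x <= K) -> (forall x, b x -> A x -> g x <= a) ->
  (\int[mu]_(x in b) (g x)%:E <= a%:E * mu b + K%:E * mu (b `\` A))%E.
Proof.
move=> mb mA mg a0 gK gA.
have mbA : measurable (b `&` A) by exact: measurableI.
have mbA' : measurable (b `\` A) by exact: measurableD.
have mgE D : measurable D -> D `<=` b -> measurable_fun D (EFin \o g).
  by move=> mD Db; apply/measurable_EFinP; exact: measurable_funS mg.
have g0 x : b x -> (0 <= (g x)%:E)%E by move=> /gK/andP[]; rewrite lee_fin.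
rewrite -{1}(setUIDK b A) ge0_integral_setU//; first last.
- by rewrite /disj_set; apply/eqP/seteqP; split => x // [[_ Ax] [_ nAx]].
- by rewrite setUIDK; move=> x /g0.
- by rewrite setUIDK; exact: mgE.
apply: leeD.
- apply: (@le_trans _ _ (\int[mu]_(x in b `&` A) (cst a%:E) x)%E).
    apply: ge0_le_integral => //.
    + by move=> x [bx _]; exact: g0.
    + by apply: mgE => // x [].
    + by move=> x [bx Ax]; rewrite lee_fin gA.
  rewrite integral_cst//; apply: lee_wpmul2l; first by rewrite lee_fin.
  by apply: le_measure; rewrite ?inE// => x [].
- apply: (@le_trans _ _ (\int[mu]_(x in b `\` A) (cst K%:E) x)%E).
    apply: ge0_le_integral => //.
    + by move=> x [bx _]; exact: g0.
    + by apply: mgE => // x [].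
    + by move=> x [bx _]; rewrite lee_fin; case/andP: (gK x bx).
  by rewrite integral_cst.
Qed.

Lemma mean_le (b A : set T) (g : T -> R) (a K delta : R) :
  measurable b -> measurable A -> measurable_fun b g -> 0 <= a -> 0 <= K ->
  (forall x, b x -> 0 <= g x <= K) -> (forall x, b x -> A x -> g x <= a) ->
  (0 < mu b)%E -> (mu b < +oo)%E -> (mu (b `\` A) <= delta%:E * mu b)%E ->
  ((mu b)^-1 * \int[mu]_(x in b) (g x)%:E <= (a + K * delta)%:E)%E.
Proof.
move=> mb mA mg a0 K0 gK gA mub0 mubfin mubA.
have [beta betaE] : exists beta, mu b = beta%:E.
  by exists (fine (mu b)); rewrite fineK// ge0_fin_numE.
have beta0 : 0 < beta by rewrite -lte_fin -betaE.
have Ile : (\int[mu]_(x in b) (g x)%:E <= ((a + K * delta) * beta)%:E)%E.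
  apply: le_trans (integral_le_split mb mA mg a0 gK gA) _.
  rewrite betaE mulrDl EFinD -EFinM leeD2l// -mulrA (EFinM K).
  by apply: lee_wpmul2l; rewrite ?lee_fin// EFinM -betaE.
rewrite betaE inver gt_eqF//; apply: le_trans (lee_wpmul2l _ Ile) _.
  by rewrite lee_fin invr_ge0 ltW.
by rewrite -EFinM mulrCA mulVf ?gt_eqF// mulr1.
Qed.

End mean_oscillation.

Lemma bounded_image_mdist {R : realType} {X : metricType R} (S : Type) (f : S -> X) :
  bounded_image f -> exists K, forall s t, 0 <= mdist (f s) (f t) <= K.
Proof.
move=> [y [M yM]]; exists (2 * M) => s t; rewrite mdist_ge0 /=.
have := metric_triangle (f s) y (f t); rewrite (metric_sym (f s) y).
by have := yM s; have := yM t; lra.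
Qed.

Section lebesgue_points.
Context {R : realType} {X : metricType R} (x0 : X).
Local Notation T := (borel x0).
Variable nu : {measure set T -> \bar R}.

Lemma locally_finite_open_cover : separable_space X -> locally_finite nu ->
  exists W : nat -> nat -> set T,
    (forall i k, open (W i k) /\ (nu (W i k) < +oo)%E) /\ forall p, exists i k, W i k p.
Proof.
move=> sX lf; have [s sP] := separable_seq x0 sX.
pose B i k : set T := ball (s i : T) k.+1%:R^-1.
exists (fun i k => if (nu (B i k) < +oo)%E then B i k else set0); split.
  move=> i k; case: ifPn => [-> |_]; first by split=> //; exact: open_ball.
  by split; [exact: open0|rewrite measure0 ltry].
move=> p; have [r r0 rfin] := lf p.
have [k kr] := natSinv_lt (divr_gt0 r0 (ltr0Sn R 1)).
have [i pi] : exists i, mdist p (s i : T) < k.+1%:R^-1 by apply: sP; rewrite invr_gt0.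
exists i, k; have Bp : B i k p by rewrite /B ballEmdist /= metric_sym.
suff -> : (nu (B i k) < +oo)%E by [].
apply: le_lt_trans rfin; apply: le_measure; rewrite ?inE.
- by apply: open_measurable_borel; exact: open_ball.
- by apply: open_measurable_borel; exact: open_ball.
move=> z; rewrite /B !ballEmdist /= => iz; change (mdist p z < r).
have := metric_triangle p (s i : T) z; move: kr pi iz; set q := k.+1%:R^-1.
lra.
Qed.

Lemma ae_density_preimage (Y : metricType R) (y0 : Y) (f : T -> borel y0) :
  separable_space X -> separable_space Y -> locally_finite nu ->
  measurable_fun setT f ->
  {ae nu, forall p (C delta lam : R), 0 < C -> 0 < delta -> 0 < lam ->
    exists A, [/\ measurable A, (forall x, A x -> mdist (f p) (f x) < lam) &
      density_point nu A C delta p]}.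
Proof.
move=> sX sY lf mf.
have [W [WP Wcov]] := locally_finite_open_cover sX lf.
have [s sP] := separable_seq y0 sY.
pose A j l : set T := f @^-1` ball (s j : borel y0) l.+1%:R^-1.
have mA j l : measurable (A j l).
  rewrite -[A j l]setTI; apply: mf => //.
  by apply: open_measurable_borel; exact: open_ball.
(* Only countably many sets [W i k], [A j l] and parameters [C], [delta] are
   involved, so the exceptional null sets can be united. *)
have : {ae nu, forall p (i k j l c m : nat), A j l p -> W i k p ->
    density_point nu (A j l) c.+1%:R m.+1%:R^-1 p}.
  apply: ae_foralln => i; apply: ae_foralln => k; apply: ae_foralln => j.
  apply: ae_foralln => l; apply: ae_foralln => c; apply: ae_foralln => m.
  have [oW Wfin] := WP i k.
  have m0 : 0 < m.+1%:R^-1 :> R by rewrite invr_gt0.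
  have := ae_density_point (ltr0Sn R c) m0 oW Wfin (mA j l).
  by apply: filterS => p dp; exact: dp.
apply: filterS => p dp C delta lam C0 d0 lam0.
have [l ll] := natSinv_lt (divr_gt0 lam0 (ltr0Sn R 1)).
have [j pj] : exists j, mdist (f p) (s j : borel y0) < l.+1%:R^-1.
  by apply: sP; rewrite invr_gt0.
have [m md] := natSinv_lt d0.
have [i [k Wp]] := Wcov p.
have Ap : A j l p by rewrite /A /= ballEmdist /= metric_sym.
exists (A j l); split => //.
  move=> x; rewrite /A /= ballEmdist /= => jx.
  have := metric_triangle (f p) (s j : borel y0) (f x).
  by move: ll pj jx; set q := l.+1%:R^-1; lra.
apply: density_point_le (dp i k j l (Num.truncn C) m Ap Wp).
  exact/ltW/truncnS_gt.
exact: ltW.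
Qed.

Lemma mean_cvg0_at (p : T) (g : T -> R) (K r : R) : measurable_fun setT g ->
  (forall x, 0 <= g x <= K) -> 0 < r -> (nu (ball p r) < +oo)%E ->
  (forall C delta lam : R, 0 < C -> 0 < delta -> 0 < lam ->
    exists A, [/\ measurable A, (forall x, A x -> g x < lam) &
      density_point nu A C delta p]) ->
  forall (B : nat -> set T) (C : R), (forall n, measurable (B n)) ->
  (forall n, B n p) -> (fun n => diam (B n)) @ \oo --> 0%E -> 0 < C ->
  (forall n, (0 < nu (enlarge4 (B n)))%E /\ (nu (enlarge4 (B n)) <= C%:E * nu (B n))%E) ->
  (fun n => ((nu (B n))^-1 * \int[nu]_(x in B n) (g x)%:E)%E) @ \oo --> 0%E.
Proof.
move=> mg gK r0 rfin gdp B C mB Bp dB0 C0 BC.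
have K0 : 0 <= K by case/andP: (gK p) => /le_trans; apply.
apply: cvge0_nonneg => e e0.
have e2 : 0 < e / 2 by rewrite divr_gt0.
have eK : 0 < e / 2 / (K + 1) by rewrite divr_gt0// ltr_pwDr.
have [A [mA gA [rA rA0 Ar]]] := gdp C _ _ C0 eK e2.
have rAr0 : 0 < Num.min rA r by rewrite lt_min rA0 r0.
apply: filterS (cvge0_lt dB0 rAr0) => n dBn.
have [nu4B0 nu4B] := BC n.
have nuB0 := measure_gt0_doubling nu4B0 nu4B.
have nuBfin : (nu (B n) < +oo)%E.
  apply: le_lt_trans rfin; apply: le_measure; rewrite ?inE//.
    by apply: open_measurable_borel; exact: open_ball.
  by apply: subset_ball_diam (Bp n) (lt_le_trans dBn _); rewrite lee_fin ge_min lexx orbT.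
have nuBA : (nu (B n `\` A) <= (e / 2 / (K + 1))%:E * nu (B n))%E.
  by apply/ltW/Ar => //; apply: lt_le_trans dBn _; rewrite lee_fin ge_min lexx.
apply/andP; split.
  rewrite mule_ge0 ?inve_ge0 ?measure_ge0// integral_ge0// => x _.
  by rewrite lee_fin; case/andP: (gK x).
apply: le_trans (mean_le (mB n) mA (measurable_funS _ _ mg) (ltW e2) K0
  (fun x _ => gK x) (fun x _ Ax => ltW (gA x Ax)) nuB0 nuBfin nuBA) _ => //.
have Kle : K * (e / 2 / (K + 1)) <= e / 2.
  by rewrite mulrCA ger_pMr// ler_pdivrMr ?ltr_pwDr// mul1r lerDl.
by rewrite lee_fin; lra.
Qed.

End lebesgue_points.

Theorem mainTheorem9 (R : realType) (X Y : metricType R) (x0 : X) (y0 : Y)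
  (nu : {measure set (borel x0) -> \bar R}) (f : borel x0 -> borel y0) :
  separable_space X -> separable_space Y ->
  locally_finite nu ->
  measurable_fun setT f ->
  bounded_image f ->
  {ae nu, forall p : borel x0,
    forall B : nat -> set (borel x0),
      (forall n, measurable (B n)) ->
      (forall n, B n p) ->
      (fun n => diam (B n)) @ \oo --> (0 : \bar R)%E ->
      (exists2 C : R, 0 < C &
         forall n, (0 < nu (enlarge4 (B n)))%E /\
                   (nu (enlarge4 (B n)) <= C%:E * nu (B n))%E) ->
      (fun n => ((nu (B n))^-1 *
                 \int[nu]_(x in B n) (mdist (f p) (f x))%:E)%E)
        @ \oo --> (0 : \bar R)%E}.
Proof.
move=> sX sY lf mf /bounded_image_mdist[K fK].
apply: filterS (ae_density_preimage sX sY lf mf) => p dp B mB Bp dB0 [C C0 BC].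
have [r r0 rfin] := lf p.
exact: mean_cvg0_at (measurable_mdist_comp (f p) mf) (fK p) r0 rfin dp
  B C mB Bp dB0 C0 BC.
Qed.
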